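(* Let $0<\kappa_0\le1$, $0<\alpha_0\le1$, $T\ge8$, $M=4T\kappa_0^{-1}$, $\Lambda\subset\mathfrak T$, and let $w,D$ be as in the context with $D\in\mathcal G_{\Lambda,T,\kappa_0}$. If $\gamma=(n_1,\dots,n_k)\in\Gamma_{D,T,\kappa_0}(n_1,n_k;k,\Lambda,\mathfrak R)$, then $$W_{D,\kappa_0}(\gamma)\le\exp\big(kM^2-\kappa_0(1-2^{-9})\|\gamma\|+2\bar D(\gamma)\big).$$
   Context: $(\mathfrak T,+)$ is an Abelian group with $|\cdot|:\mathfrak T\to[0,\infty)$, $|m|=0$ iff $m=0$, $|m+n|\le|m|+|n|$. Fix $\Lambda\subset\mathfrak T$ and functions $w:\Lambda\times\Lambda\to[0,\infty)$, $D:\Lambda\to[1,\infty)$ with $w(m,m)=1$ and $w(m,n)\le\exp(-\kappa_0|m-n|^{\alpha_0})$. A trajectory is a finite sequence $\gamma=(n_1,\dots,n_k)$ of points of $\Lambda$, $k\ge1$, with $n_{j+1}\ne n_j$. Put $\|\gamma\|=\sum_{i=1}^{k-1}|n_i-n_{i+1}|^{\alpha_0}$ ($=0$ if $k=1$), $\bar D(\gamma)=\max_jD(n_j)$, $W_{D,\kappa_0}(\gamma)=\exp(-\kappa_0\|\gamma\|+\sum_{j=1}^kD(n_j))$. Let $\mu_\Lambda(m)=\inf\{|m-n|:n\in\mathfrak T\setminus\Lambda\}$. $D\in\mathcal G_{\Lambda,T,\kappa_0}$ means: $D(m)\le T\mu_\Lambda(m)^{\alpha_0/5}$ for every $m$ with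 $D(m)\ge4T\kappa_0^{-1}$. For $D\in\mathcal G_{\Lambda,T,\kappa_0}$, $\Gamma_{D,T,\kappa_0}(n_1,n_k;k,\Lambda,\mathfrak R)$ is the set of trajectories $\gamma=(n_1,\dots,n_k)$ such that: (A) for all $i<j$ with $j\ge i+2$ and $\min(D(n_i),D(n_j))\ge4T\kappa_0^{-1}$ one has $\min(D(n_i),D(n_j))\le T\|(n_i,\dots,n_j)\|^{\alpha_0/5}$; and (B) if for some $i$ one has $\min(D(n_i),D(n_{i+1}))\ge4T\kappa_0^{-1}$ and $\min(D(n_i),D(n_{i+1}))>T|n_i-n_{i+1}|^{\alpha_0/5}$, then for all $j'<i<i+1<j''$: $\min(D(n_{j'}),D(n_i))\le T\|(n_{j'},\dots,n_i)\|^{\alpha_0/5}$, $\min(D(n_i),D(n_{j''}))\le T\|(n_i,\dots,n_{j''})\|^{\alpha_0/5}$, $\min(D(n_{j'}),D(n_{i+1}))\le T\|(n_{j'},\dots,n_{i+1})\|^{\alpha_0/5}$, $\min(D(n_{i+1}),D(n_{j''}))\le T\|(n_{i+1},\dots,n_{j''})\|^{\alpha_0/5}$. *)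

From Stdlib Require Import Reals List.
Import ListNotations.
Open Scope R_scope.

(* Real power x^y for x >= 0, y > 0, with the convention 0^y = 0
   (Stdlib's Rpower 0 y is exp(y * ln 0) = 1, which is wrong here). *)
Definition rpow (x y : R) : R := if Req_EM_T x 0 then 0 else Rpower x y.

(* Infimum of a set of reals (used for mu_Lambda). If the set is empty,
   no real is its infimum (mu = +infinity). *)
Definition is_inf (S : R -> Prop) (r : R) : Prop :=
  (forall x, S x -> r <= x) /\ (forall b, (forall x, S x -> b <= x) -> b <= r).

Section Traj.
Variable G : Type.
Variable dist : G -> G -> R.   (* dist m n = |m - n| *)
Variable alpha0 : R.
Variable D : G -> R.

Fixpoint path_norm (l : list G) : R :=
  match l with
  | x :: ((y :: _) as l') => rpow (dist x y) alpha0 + path_norm l'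
  | _ => 0
  end.

(* ||(n_i, ..., n_j)|| with 0-based indices i <= j *)
Definition seg_norm (l : list G) (i j : nat) : R :=
  path_norm (firstn (S (j - i)) (skipn i l)).

Definition sumD (l : list G) : R := fold_right (fun x acc => D x + acc) 0 l.

Definition Dbar (l : list G) : R :=
  match l with
  | [] => 0
  | x :: l' => fold_right (fun y acc => Rmax (D y) acc) (D x) l'
  end.

Fixpoint consec_distinct (l : list G) : Prop :=
  match l with
  | x :: ((y :: _) as l') => x <> y /\ consec_distinct l'
  | _ => True
  end.
End Traj.

Arguments path_norm {G} dist alpha0 l.
Arguments seg_norm {G} dist alpha0 l i j.
Arguments sumD {G} D l.
Arguments Dbar {G} D l.
Arguments consec_distinct {G} l.

Definition Wgt {G : Type} (dist : G -> G -> R) (alpha0 kappa0 : R) (D : G -> R)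
  (l : list G) : R :=
  exp (- kappa0 * path_norm dist alpha0 l + sumD D l).

Definition in_GG {G : Type} (dist : G -> G -> R) (alpha0 : R)
  (Lambda : G -> Prop) (T kappa0 : R) (D : G -> R) : Prop :=
  forall m, Lambda m -> D m >= 4 * T / kappa0 ->
    forall mu, is_inf (fun r => exists n, ~ Lambda n /\ r = dist m n) mu ->
      D m <= T * rpow mu (alpha0 / 5).

(* gamma = (n_1,...,n_k) in Gamma_{D,T,kappa0}(n_1,n_k;k,Lambda,R).
   Points are indexed 0..k-1 (0-based); n1 is the first point, nk the last. *)
Definition in_Gamma {G : Type} (dist : G -> G -> R) (alpha0 : R)
  (Lambda : G -> Prop) (T kappa0 : R) (D : G -> R)
  (n1 nk : G) (k : nat) (l : list G) : Prop :=
  let M := 4 * T / kappa0 in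
  let n := fun i => nth i l n1 in
  let mD := fun i j => Rmin (D (n i)) (D (n j)) in
  let snorm := seg_norm dist alpha0 l in
  (1 <= k)%nat /\ length l = k /\ n O = n1 /\ n (Nat.pred k) = nk /\
  Forall Lambda l /\ consec_distinct l /\
  (* (A) *)
  (forall i j, (j < k)%nat -> (i + 2 <= j)%nat -> mD i j >= M ->
     mD i j <= T * rpow (snorm i j) (alpha0 / 5)) /\
  (* (B) *)
  (forall i, (i + 1 < k)%nat ->
     mD i (S i) >= M -> mD i (S i) > T * rpow (dist (n i) (n (S i))) (alpha0 / 5) ->
     forall j' j'', (j' < i)%nat -> (S i < j'')%nat -> (j'' < k)%nat ->
       mD j' i <= T * rpow (snorm j' i) (alpha0 / 5) /\
       mD i j'' <= T * rpow (snorm i j'') (alpha0 / 5) /\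
       mD j' (S i) <= T * rpow (snorm j' (S i)) (alpha0 / 5) /\
       mD (S i) j'' <= T * rpow (snorm (S i) j'') (alpha0 / 5)).

(* Since [W = exp (- kappa0 ||gamma|| + sum_j D(n_j))], it suffices to bound [sum_j D(n_j)]
   by [k M^2 + 2^-9 kappa0 ||gamma|| + 2 bar D].  By condition (A), at a level [mu >= M] any
   two points with [D > mu] at index distance at least 2 are joined by a sub-path of norm at
   least [(mu / T)^5], so at most [2 + 2 ||gamma|| (T / mu)^5] points lie above [mu].  Summing
   [min (D, lam)] dyadically from [lam = bar D] down to [lam ~ M^2] and charging the points
   above each level [lam / 2] to the path yields
   [sum min (D, lam) <= k M^2 + 2 lam + ||gamma|| (kappa0 / 512 - 3 T^5 / lam^4)];
   the constant fits because [kappa0 / 512 * (4 T / kappa0)^8 >= 48 T^5]. *)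

From Stdlib Require Import Reals List Lia Lra.
Import ListNotations.
Open Scope R_scope.

Lemma exp_le_compat x y : x <= y -> exp x <= exp y.
Proof.
  intros [Hlt | ->]; [now left; apply exp_increasing | apply Rle_refl].
Qed.

Lemma rpow_ge0 x y : 0 <= rpow x y.
Proof. unfold rpow; destruct Req_EM_T; [lra | left; apply exp_pos]. Qed.

Lemma pow5_le_of_lt_rpow s c a :
  1 <= c -> 0 < a <= 1 -> c < rpow s (a / 5) -> c ^ 5 <= s.
Proof.
  intros Hc Ha. unfold rpow; destruct (Req_EM_T s 0) as [_ | Hs0]; [lra |].
  intros Hlt.
  assert (Hln : 0 < ln s).
  { destruct (Rle_lt_dec (ln s) 0) as [H | H]; [exfalso | exact H].
    assert (exp (a / 5 * ln s) <= exp 0) by (apply exp_le_compat; nra).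
    unfold Rpower in Hlt; rewrite exp_0 in *; lra. }
  (* Stdlib's [ln] is 0 on nonpositive reals, so [0 < ln s] forces [0 < s] *)
  assert (Hs : 1 < s).
  { assert (Hpos : 0 < s) by (unfold ln in Hln; destruct (Rlt_dec 0 s); [assumption | lra]).
    apply ln_lt_inv; [lra | exact Hpos | now rewrite ln_1]. }
  assert (Hroot : c <= Rpower s (1 / 5)).
  { left. eapply Rlt_le_trans; [exact Hlt | apply Rle_Rpower; lra]. }
  assert (Hpow : c ^ 5 <= Rpower s (1 / 5) ^ 5) by (apply pow_incr; lra).
  rewrite <- (Rpower_pow 5 (Rpower s (1 / 5))), Rpower_mult in Hpow by apply exp_pos.
  replace (1 / 5 * INR 5) with 1 in Hpow by (simpl; field).
  rewrite Rpower_1 in Hpow; lra.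
Qed.

Lemma pow2_unbounded x : exists L, x <= 2 ^ L.
Proof.
  destruct (Pow_x_infinity 2 ltac:(rewrite Rabs_pos_eq; lra) x) as [L HL].
  exists L. specialize (HL L (Nat.le_refl L)).
  rewrite Rabs_pos_eq in HL by (apply pow_le; lra). lra.
Qed.

Section PathNorm.
Context {G : Type} (dist : G -> G -> R) (alpha : R).

Lemma path_norm_ge0 l : 0 <= path_norm dist alpha l.
Proof.
  induction l as [| x [| y l] IH]; simpl; try lra.
  pose proof (rpow_ge0 (dist x y) alpha); simpl in IH; lra.
Qed.

Lemma path_norm_cons_le x l : path_norm dist alpha l <= path_norm dist alpha (x :: l).
Proof.
  destruct l as [| y l]; simpl; [lra |].
  pose proof (rpow_ge0 (dist x y) alpha); simpl in *; lra.
Qed.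

Lemma path_norm_split l1 z l2 :
  path_norm dist alpha (l1 ++ z :: l2)
  = path_norm dist alpha (l1 ++ [z]) + path_norm dist alpha (z :: l2).
Proof.
  induction l1 as [| x [| y l1] IH]; simpl; try lra.
  simpl in IH; rewrite IH; ring.
Qed.

Lemma seg_norm_prefix l1 z l2 :
  seg_norm dist alpha (l1 ++ z :: l2) 0 (length l1) = path_norm dist alpha (l1 ++ [z]).
Proof.
  unfold seg_norm. rewrite Nat.sub_0_r, skipn_O, <- Nat.add_1_r, firstn_app_2. reflexivity.
Qed.

Lemma seg_norm_skipn l a i j :
  seg_norm dist alpha (skipn a l) i j = seg_norm dist alpha l (a + i) (a + j).
Proof.
  unfold seg_norm. rewrite skipn_skipn, (Nat.add_comm i a).
  now replace (a + j - (a + i))%nat with (j - i)%nat by lia.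
Qed.

End PathNorm.

Section CountAbove.
Context {G : Type} (dist : G -> G -> R) (alpha : R) (D : G -> R).

Definition count_above (mu : R) (l : list G) : nat :=
  fold_right (fun x acc => if Rlt_dec mu (D x) then S acc else acc) O l.

Lemma count_above_cons_le mu x l : (count_above mu (x :: l) <= S (count_above mu l))%nat.
Proof. simpl; destruct Rlt_dec; lia. Qed.

Lemma count_above_app_low mu pre l :
  Forall (fun y => D y <= mu) pre -> count_above mu (pre ++ l) = count_above mu l.
Proof. induction 1; simpl; auto; destruct Rlt_dec; [lra | auto]. Qed.

Lemma count_above_cons2_app_low mu x y pre l :
  Forall (fun y => D y <= mu) pre ->
  (count_above mu (x :: y :: pre ++ l) <= 2 + count_above mu l)%nat.
Proof.
  intros Hpre. rewrite <- (count_above_app_low mu pre l Hpre).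
  pose proof (count_above_cons_le mu y (pre ++ l)).
  pose proof (count_above_cons_le mu x (y :: pre ++ l)). lia.
Qed.

Lemma split_first_above mu l :
  Forall (fun y => D y <= mu) l \/
  exists pre z post, l = pre ++ z :: post /\ Forall (fun y => D y <= mu) pre /\ mu < D z.
Proof.
  induction l as [| x l IH]; [now left |].
  destruct (Rlt_le_dec mu (D x)) as [Hx | Hx].
  - right. now exists [], x, l.
  - destruct IH as [Hl | (pre & z & post & -> & Hpre & Hz)]; [left; now constructor |].
    right. exists (x :: pre), z, post. repeat split; auto.
Qed.

Definition separated_above (mu P : R) (d : G) (l : list G) : Prop :=
  forall i j, (j < length l)%nat -> (i + 2 <= j)%nat ->
    mu < D (nth i l d) -> mu < D (nth j l d) -> P <= seg_norm dist alpha l i j.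

Lemma separated_above_skipn mu P d l a :
  separated_above mu P d l -> separated_above mu P d (skipn a l).
Proof.
  intros Hsep i j Hj Hij Hi Hj'. rewrite length_skipn in Hj. rewrite nth_skipn in Hi, Hj'.
  rewrite seg_norm_skipn. apply Hsep; auto; lia.
Qed.

(* Between two consecutive blocks of at most two high points the path has norm at least [P]. *)
Lemma count_above_le mu P d l :
  0 < P -> separated_above mu P d l ->
  INR (count_above mu l) <= 2 + 2 * path_norm dist alpha l / P.
Proof.
  intros HP. remember (length l) as n eqn:Hn. revert l Hn.
  induction n as [n IH] using Wf_nat.lt_wf_ind. intros l Hn Hsep.
  assert (HPinv : 0 <= / P) by (left; apply Rinv_0_lt_compat; lra).
  assert (Hnorm : forall l', 0 <= path_norm dist alpha l' / P)
    by (intros; apply Rmult_le_pos; [apply path_norm_ge0 | lra]).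
  destruct l as [| x l]; [simpl; pose proof (Hnorm []); lra |].
  destruct (Rlt_le_dec mu (D x)) as [Hx | Hx].
  2:{ simpl count_above. destruct Rlt_dec; [lra |].
      assert (IHl := IH (length l) ltac:(simpl in Hn; lia) l eq_refl
                       (separated_above_skipn _ _ _ _ 1 Hsep)).
      assert (path_norm dist alpha l / P <= path_norm dist alpha (x :: l) / P)
        by (apply Rmult_le_compat_r; [lra | apply path_norm_cons_le]).
      lra. }
  destruct l as [| y rest].
  { simpl. destruct Rlt_dec; simpl; pose proof (Hnorm [x]); lra. }
  destruct (split_first_above mu rest) as [Hlow | (pre & z & post & -> & Hpre & Hz)].
  { pose proof (count_above_cons2_app_low mu x y rest [] Hlow) as Hc.
    rewrite app_nil_r, Nat.add_0_r in Hc. apply le_INR in Hc. simpl (INR 2) in Hc.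
    pose proof (Hnorm (x :: y :: rest)). lra. }
  set (A := x :: y :: pre).
  change (x :: y :: pre ++ z :: post) with (A ++ z :: post) in *.
  assert (Hfar : 1 <= path_norm dist alpha (A ++ [z]) / P).
  { apply (Rmult_le_reg_r P); [lra |]. field_simplify; [| lra].
    rewrite <- seg_norm_prefix with (l2 := post).
    apply Hsep; rewrite ?nth_middle; auto; rewrite ?length_app; simpl; lia. }
  assert (IHpost : INR (count_above mu (z :: post))
                   <= 2 + 2 * path_norm dist alpha (z :: post) / P).
  { apply (IH (length (z :: post))); auto.
    - rewrite Hn, length_app. simpl; lia.
    - replace (z :: post) with (skipn (length A) (A ++ z :: post))
        by (rewrite skipn_app, skipn_all, Nat.sub_diag; reflexivity).
      now apply separated_above_skipn. }
  pose proof (count_above_cons2_app_low mu x y pre (z :: post) Hpre) as Hc.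
  change (x :: y :: pre ++ z :: post) with (A ++ z :: post) in Hc.
  apply le_INR in Hc. rewrite plus_INR in Hc. simpl (INR 2) in Hc.
  rewrite path_norm_split, Rmult_plus_distr_l, Rdiv_plus_distr. unfold Rdiv in *. lra.
Qed.

End CountAbove.

Section TruncatedSum.
Context {G : Type} (D : G -> R).

Definition trunc_sum (lam : R) (l : list G) : R :=
  fold_right (fun x acc => Rmin (D x) lam + acc) 0 l.

Lemma trunc_sum_le_length lam l : trunc_sum lam l <= INR (length l) * lam.
Proof.
  induction l as [| x l IH]; simpl length; [simpl; lra |].
  rewrite S_INR. simpl. pose proof (Rmin_r (D x) lam). lra.
Qed.

Lemma sumD_le_trunc_sum b l : (forall y, In y l -> D y <= b) -> sumD D l <= trunc_sum b l.
Proof.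
  induction l as [| x l IH]; intros Hb; simpl; [lra |].
  rewrite Rmin_left by (apply Hb; now left).
  assert (sumD D l <= trunc_sum b l) by (apply IH; intros; apply Hb; now right). lra.
Qed.

(* Layer cake: above level [lam / 2] each point contributes at most [lam / 2] more. *)
Lemma trunc_sum_halve lam l : 0 <= lam ->
  trunc_sum lam l <= trunc_sum (lam / 2) l + lam / 2 * INR (count_above D (lam / 2) l).
Proof.
  intros Hlam. induction l as [| x l IH]; simpl; [lra |].
  destruct Rlt_dec; [rewrite S_INR |]; unfold Rmin; repeat destruct Rle_dec; nra.
Qed.

Section Dyadic.
Variables (l : list G) (pn T M E : R).
Hypotheses (Hpn : 0 <= pn) (HT : 0 < T) (HM : 2 <= M) (HE : 48 * T ^ 5 <= E * M ^ 8).

Lemma trunc_sum_bound_base lam : M ^ 2 / 2 <= lam <= M ^ 2 ->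
  trunc_sum lam l <= INR (length l) * M ^ 2 + 2 * lam + pn * (E - 3 * T ^ 5 / lam ^ 4).
Proof.
  intros [Hlo Hhi].
  assert (Hlam4 : M ^ 8 / 16 <= lam ^ 4).
  { replace (M ^ 8 / 16) with ((M ^ 2 / 2) ^ 4) by field. apply pow_incr; nra. }
  assert (HT5 : 0 < T ^ 5) by (apply pow_lt; lra).
  assert (Hdecay : 3 * T ^ 5 / lam ^ 4 <= E).
  { assert (HM8 : 0 < M ^ 8) by (apply pow_lt; lra).
    assert (HEpos : 0 < E) by nra.
    assert (Hlam : 0 < lam) by nra.
    apply (Rmult_le_reg_r (lam ^ 4)); [apply pow_lt; lra |]. field_simplify; [| lra].
    assert (E * (M ^ 8 / 16) <= E * lam ^ 4) by (apply Rmult_le_compat_l; lra). lra. }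
  pose proof (trunc_sum_le_length lam l). pose proof (pos_INR (length l)).
  assert (INR (length l) * lam <= INR (length l) * M ^ 2) by (apply Rmult_le_compat_l; lra).
  assert (0 <= pn * (E - 3 * T ^ 5 / lam ^ 4)) by (apply Rmult_le_pos; lra).
  lra.
Qed.

(* Halving [lam] down to [M^2]: the term [-3 T^5 / lam^4] absorbs the points above [lam / 2]. *)
Lemma trunc_sum_bound :
  (forall mu, M <= mu -> INR (count_above D mu l) <= 2 + 2 * pn / (mu / T) ^ 5) ->
  forall L lam, M ^ 2 / 2 <= lam <= M ^ 2 * 2 ^ L ->
  trunc_sum lam l <= INR (length l) * M ^ 2 + 2 * lam + pn * (E - 3 * T ^ 5 / lam ^ 4).
Proof.
  intros Hcount L. induction L as [| L IH]; intros lam [Hlo Hhi].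
  { apply trunc_sum_bound_base. simpl in Hhi; lra. }
  destruct (Rle_lt_dec lam (M ^ 2)) as [Hsmall | Hbig]; [now apply trunc_sum_bound_base |].
  assert (Hlam : 0 < lam) by nra.
  assert (IHhalf := IH (lam / 2) ltac:(simpl in Hhi; split; lra)).
  assert (Hc := Hcount (lam / 2) ltac:(nra)).
  pose proof (trunc_sum_halve lam l ltac:(lra)).
  set (t := T ^ 5 / lam ^ 4).
  assert (Hw : 0 <= pn * t)
    by (apply Rmult_le_pos;
        [lra | unfold t; apply Rle_mult_inv_pos; [apply pow_le | apply pow_lt]; lra]).
  replace (3 * T ^ 5 / (lam / 2) ^ 4) with (48 * t) in IHhalf by (unfold t; field; lra).
  replace (3 * T ^ 5 / lam ^ 4) with (3 * t) by (unfold t; field; lra).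
  assert (Hcnt : lam / 2 * INR (count_above D (lam / 2) l) <= lam + 32 * (pn * t)).
  { replace (lam + 32 * (pn * t)) with (lam / 2 * (2 + 2 * pn / (lam / 2 / T) ^ 5))
      by (unfold t; field; lra).
    apply Rmult_le_compat_l; lra. }
  lra.
Qed.

End Dyadic.
End TruncatedSum.

Lemma Dbar_ge {G} (D : G -> R) x l y : In y (x :: l) -> D y <= Dbar D (x :: l).
Proof.
  induction l as [| z l IH]; simpl Dbar in *.
  - intros [-> | []]; lra.
  - intros [-> | [-> | Hy]].
    + eapply Rle_trans; [apply IH; now left | apply Rmax_r].
    + apply Rmax_l.
    + eapply Rle_trans; [apply IH; now right | apply Rmax_r].
Qed.

Section Trajectory.
Context {G : Type} (dist : G -> G -> R) (kappa0 alpha0 T : R) (Lambda : G -> Prop) (D : G -> R).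
Hypotheses (hk : 0 < kappa0 <= 1) (ha : 0 < alpha0 <= 1) (hT : 8 <= T).

Lemma in_Gamma_separated_above n1 nk k gamma mu :
  in_Gamma dist alpha0 Lambda T kappa0 D n1 nk k gamma -> 4 * T / kappa0 <= mu ->
  separated_above dist alpha0 D mu ((mu / T) ^ 5) n1 gamma.
Proof.
  intros (_ & Hlen & _ & _ & _ & _ & HA & _) Hmu i j Hj Hij Hi Hj'.
  assert (HM : 4 * T <= 4 * T / kappa0).
  { apply (Rmult_le_reg_r kappa0); [lra |]. field_simplify; nra. }
  assert (Hm : mu < Rmin (D (nth i gamma n1)) (D (nth j gamma n1)))
    by (apply Rmin_glb_lt; assumption).
  specialize (HA i j ltac:(lia) Hij ltac:(lra)).
  apply (pow5_le_of_lt_rpow _ _ alpha0); [| exact ha |].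
  - apply (Rmult_le_reg_l T); [lra |]. field_simplify; lra.
  - apply (Rmult_lt_reg_l T); [lra |]. field_simplify; lra.
Qed.

Lemma weight_constant_bound : 48 * T ^ 5 <= kappa0 / 512 * (4 * T / kappa0) ^ 8.
Proof.
  set (M := 4 * T / kappa0).
  assert (HMk : kappa0 * M = 4 * T) by (unfold M; field; lra).
  assert (HM : 4 * T <= M) by nra.
  replace (kappa0 / 512 * M ^ 8) with (4 * T * M ^ 7 / 512) by (rewrite <- HMk; field).
  assert (H7 : (4 * T) ^ 7 <= M ^ 7) by (apply pow_incr; lra).
  assert (HT3 : 1 <= T ^ 3) by (apply pow_R1_Rle; lra).
  assert (HT5 : 0 < T ^ 5) by (apply pow_lt; lra).
  assert (4 * T * (4 * T) ^ 7 <= 4 * T * M ^ 7) by (apply Rmult_le_compat_l; lra).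
  replace (4 * T * (4 * T) ^ 7) with (65536 * (T ^ 3 * T ^ 5)) in H by ring.
  nra.
Qed.

Hypothesis hD : forall m, Lambda m -> 1 <= D m.

Lemma sumD_le_of_in_Gamma n1 nk k gamma :
  in_Gamma dist alpha0 Lambda T kappa0 D n1 nk k gamma ->
  sumD D gamma <= INR k * (4 * T / kappa0) ^ 2
                  + kappa0 / 512 * path_norm dist alpha0 gamma + 2 * Dbar D gamma.
Proof.
  intros HG. pose proof HG as (Hk & Hlen & _ & _ & HLam & _).
  set (M := 4 * T / kappa0).
  set (pn := path_norm dist alpha0 gamma).
  assert (HM : 2 <= M) by (unfold M; apply (Rmult_le_reg_r kappa0); [lra |]; field_simplify; nra).
  assert (Hpn : 0 <= pn) by apply path_norm_ge0.
  destruct gamma as [| x g]; [simpl in Hlen; lia |].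
  set (Db := Dbar D (x :: g)).
  assert (Hall : forall y, In y (x :: g) -> D y <= Db) by (intros; now apply Dbar_ge).
  assert (HDb : 1 <= Db).
  { pose proof (hD x ltac:(now inversion HLam)). pose proof (Hall x (or_introl eq_refl)). lra. }
  pose proof (sumD_le_trunc_sum D Db (x :: g) Hall) as Htrunc.
  assert (Hkap : 0 <= kappa0 / 512 * pn) by (apply Rmult_le_pos; lra).
  rewrite <- Hlen.
  destruct (Rle_lt_dec Db (M ^ 2)) as [Hsmall | Hbig].
  { pose proof (trunc_sum_le_length D Db (x :: g)). pose proof (pos_INR (length (x :: g))).
    assert (INR (length (x :: g)) * Db <= INR (length (x :: g)) * M ^ 2)
      by (apply Rmult_le_compat_l; lra).
    lra. }
  assert (Hcount : forall mu, M <= mu ->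
            INR (count_above D mu (x :: g)) <= 2 + 2 * pn / (mu / T) ^ 5).
  { intros mu Hmu. apply (count_above_le dist alpha0 D mu _ n1).
    - apply pow_lt. apply Rdiv_lt_0_compat; lra.
    - now apply (in_Gamma_separated_above n1 nk k). }
  destruct (pow2_unbounded (Db / M ^ 2)) as [L HL].
  assert (HDbL : Db <= M ^ 2 * 2 ^ L).
  { apply (Rmult_le_compat_l (M ^ 2)) in HL; [| nra]. field_simplify in HL; nra. }
  pose proof (trunc_sum_bound D (x :: g) pn T M (kappa0 / 512) Hpn ltac:(lra) HM
                weight_constant_bound Hcount L Db ltac:(lra)) as Hbound.
  assert (Hdecay : 0 <= pn * (3 * T ^ 5 / Db ^ 4))
    by (apply Rmult_le_pos;
        [lra | apply Rle_mult_inv_pos; [apply Rmult_le_pos, pow_le | apply pow_lt]; lra]).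
  nra.
Qed.

End Trajectory.

Theorem mainTheorem2
  (G : Type) (add : G -> G -> G) (opp : G -> G) (zero : G) (norm : G -> R)
  (add_assoc : forall a b c, add a (add b c) = add (add a b) c)
  (add_comm : forall a b, add a b = add b a)
  (add_zero : forall a, add a zero = a)
  (add_opp : forall a, add a (opp a) = zero)
  (norm_nonneg : forall m, 0 <= norm m)
  (norm_zero : forall m, norm m = 0 <-> m = zero)
  (norm_triangle : forall m n, norm (add m n) <= norm m + norm n)
  (kappa0 alpha0 T : R)
  (hk : 0 < kappa0 <= 1) (ha : 0 < alpha0 <= 1) (hT : 8 <= T)
  (Lambda : G -> Prop) (w : G -> G -> R) (D : G -> R)
  (hw_nonneg : forall m n, Lambda m -> Lambda n -> 0 <= w m n)
  (hw_diag : forall m, Lambda m -> w m m = 1)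
  (hw_decay : forall m n, Lambda m -> Lambda n ->
     w m n <= exp (- kappa0 * rpow (norm (add m (opp n))) alpha0))
  (hD : forall m, Lambda m -> 1 <= D m)
  (hDG : in_GG (fun m n => norm (add m (opp n))) alpha0 Lambda T kappa0 D)
  (n1 nk : G) (k : nat) (gamma : list G)
  (hgamma : in_Gamma (fun m n => norm (add m (opp n))) alpha0 Lambda T kappa0 D
              n1 nk k gamma) :
  let M := 4 * T / kappa0 in
  Wgt (fun m n => norm (add m (opp n))) alpha0 kappa0 D gamma <=
  exp (INR k * M ^ 2
       - kappa0 * (1 - / 2 ^ 9) * path_norm (fun m n => norm (add m (opp n))) alpha0 gamma
       + 2 * Dbar D gamma).
Proof.
  intros M. unfold Wgt. apply exp_le_compat.
  pose proof (sumD_le_of_in_Gamma _ _ _ _ _ _ hk ha hT hD _ _ _ _ hgamma).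
  replace (/ 2 ^ 9) with (/ 512) by (simpl; lra).
  fold M in H. lra.
Qed.
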